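(* Let $A$ be a nonempty finite set of $n$ alternatives. If a choice rule $C$ on $A$ satisfies capacity-filling, monotonicity, and the capacity-wise weak axiom of revealed preference (CWARP), then it also satisfies the irrelevance of accepted alternatives.
   Context: Let $\mathcal{A}$ be the set of all nonempty subsets of $A$. A choice rule is a map $C$ assigning to each $(S,q)\in\mathcal{A}\times\{1,\dots,n\}$ a nonempty set $C(S,q)\subseteq S$ with $|C(S,q)|\le q$; write $R(S,q)=S\setminus C(S,q)$. Capacity-filling: for each $(S,q)$, $|C(S,q)|=\min\{|S|,q\}$. Monotonicity: for each $S\in\mathcal{A}$ and $q\in\{1,\dots,n-1\}$, $C(S,q)\subseteq C(S,q+1)$. For $q\in\{2,\dots,n\}$ and $a,b\in A$, $a$ is revealed to be preferred to $b$ at $q$ if there exists $S\in\mathcal{A}$ with $a,b\notin C(S,q-1)$, $a\in C(S,q)$ and $b\in R(S,q)$. CWARP: for each $q\in\{2,\dots,n\}$ and each $a,b\in A$, if $a$ is revealed to be preferred to $b$ at $q$, then $b$ is not revealed to be preferred to $a$ at $q$. Irrelevance of accepted alternatives: for each $S,S'\in\mathcal{A}$ and $q\in\{1,\dots,n-1\}$, if $R(S,q)=R(S',q)$ then $C(S,q+1)\cap R(S,q)=C(S',q+1)\cap R(S',q)$. *)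

From mathcomp Require Import all_boot.
Set Implicit Arguments. Unset Strict Implicit. Unset Printing Implicit Defensive.

(* A choice rule is modelled as a
   total function C : {set A} -> nat -> {set A}; only its values on the
   domain (S nonempty, 1 <= q <= n) matter, and all axioms are restricted to
   this domain. *)

Definition rej (A : finType) (C : {set A} -> nat -> {set A}) (S : {set A}) (q : nat)
  : {set A} := S :\: C S q.

Definition is_choice_rule (A : finType) (C : {set A} -> nat -> {set A}) : Prop :=
  forall (S : {set A}) (q : nat), S != set0 -> 1 <= q <= #|A| ->
    [/\ C S q != set0, C S q \subset S & #|C S q| <= q].

Definition capacity_filling (A : finType) (C : {set A} -> nat -> {set A}) : Prop :=
  forall (S : {set A}) (q : nat), S != set0 -> 1 <= q <= #|A| ->
    #|C S q| = minn #|S| q.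

Definition monotonicity (A : finType) (C : {set A} -> nat -> {set A}) : Prop :=
  forall (S : {set A}) (q : nat), S != set0 -> 1 <= q <= #|A| - 1 ->
    C S q \subset C S q.+1.

Definition revealed_pref (A : finType) (C : {set A} -> nat -> {set A})
  (q : nat) (a b : A) : Prop :=
  exists S : {set A}, [/\ S != set0, a \notin C S q.-1, b \notin C S q.-1,
                          a \in C S q & b \in rej C S q].

Definition CWARP (A : finType) (C : {set A} -> nat -> {set A}) : Prop :=
  forall (q : nat) (a b : A), 2 <= q <= #|A| ->
    revealed_pref C q a b -> ~ revealed_pref C q b a.

Definition irrelevance_accepted (A : finType) (C : {set A} -> nat -> {set A}) : Prop :=
  forall (S S' : {set A}) (q : nat), S != set0 -> S' != set0 ->
    1 <= q <= #|A| - 1 ->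
    rej C S q = rej C S' q ->
    C S q.+1 :&: rej C S q = C S' q.+1 :&: rej C S' q.

(* Under capacity-filling and monotonicity, raising the capacity from q to
   q+1 admits exactly one new alternative whenever something is rejected at q,
   and that alternative is revealed preferred at q+1 to every alternative
   still rejected.  If two choice problems with the same rejected set admitted
   different new alternatives x and y, then x would be revealed preferred to y
   and y to x at q+1, contradicting CWARP. *)

From mathcomp Require Import all_boot.
From mathcomp Require Import zify.

Set Implicit Arguments.
Unset Strict Implicit.
Unset Printing Implicit Defensive.

Lemma revealed_pref_new_choice (A : finType) (C : {set A} -> nat -> {set A})
    (S : {set A}) (q : nat) (x y : A) :
  C S q.+1 :&: rej C S q = [set x] -> y \in rej C S q -> y != x ->
  revealed_pref C q.+1 x y.
Proof.
move=> new_x yR neq_yx.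
have /setIP[xC xR] : x \in C S q.+1 :&: rej C S q by rewrite new_x set11.
move: xR yR; rewrite !inE => /andP[xCq _] /andP[yCq yS].
have yC : y \notin C S q.+1.
  apply: contra neq_yx => yC.
  by rewrite -in_set1 -new_x !inE yC yCq yS.
exists S; split=> //; last by rewrite !inE yC yS.
by apply/set0Pn; exists y.
Qed.

Section NewChoice.

Variables (A : finType) (C : {set A} -> nat -> {set A}).
Hypotheses (choiceC : is_choice_rule C) (fillC : capacity_filling C)
  (monoC : monotonicity C).

Lemma new_choice_single (S : {set A}) (q : nat) :
  S != set0 -> 1 <= q <= #|A| - 1 -> rej C S q != set0 ->
  exists x, C S q.+1 :&: rej C S q = [set x].
Proof.
move=> S0 q_range /set0Pn[z zR].
have q_dom : 1 <= q <= #|A| by lia.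
have q1_dom : 1 <= q.+1 <= #|A| by lia.
have [_ CqS _] := choiceC S0 q_dom.
have [_ Cq1S _] := choiceC S0 q1_dom.
have card_q := fillC S0 q_dom.
have card_q1 := fillC S0 q1_dom.
have Cq_Cq1 := monoC S0 q_range.
have card_lt : #|C S q| < #|S|.
  by apply/proper_card/properP; split=> //; exists z; move: zR; rewrite inE => /andP[].
have new_eq : C S q.+1 :&: rej C S q = C S q.+1 :\: C S q.
  by rewrite /rej setIDA (setIidPl Cq1S).
have /eqP/cards1P[x new_x] : #|C S q.+1 :\: C S q| = 1.
  by rewrite cardsD (setIidPr Cq_Cq1); lia.
by exists x; rewrite new_eq.
Qed.

End NewChoice.

Theorem lemma1 (A : finType) (C : {set A} -> nat -> {set A}) :
  0 < #|A| ->
  is_choice_rule C ->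
  capacity_filling C ->
  monotonicity C ->
  CWARP C ->
  irrelevance_accepted C.
Proof.
move=> _ choiceC fillC monoC cwarpC S S' q S0 S'0 q_range sameR.
have [R0 | R_ne0] := eqVneq (rej C S q) set0.
  by rewrite -sameR R0 !setI0.
have R'_ne0 : rej C S' q != set0 by rewrite -sameR.
have [x new_x] := new_choice_single choiceC fillC monoC S0 q_range R_ne0.
have [y new_y] := new_choice_single choiceC fillC monoC S'0 q_range R'_ne0.
rewrite new_x new_y; have [-> // | neq_xy] := eqVneq x y.
have /setIP[_ xR] : x \in C S q.+1 :&: rej C S q by rewrite new_x set11.
have /setIP[_ yR'] : y \in C S' q.+1 :&: rej C S' q by rewrite new_y set11.
have xR' : x \in rej C S' q by rewrite -sameR.
have yR : y \in rej C S q by rewrite sameR.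
have q1_range : 2 <= q.+1 <= #|A| by lia.
case: (cwarpC _ x y q1_range).
- by apply: revealed_pref_new_choice new_x yR _; rewrite eq_sym.
- exact: revealed_pref_new_choice new_y xR' neq_xy.
Qed.
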